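(* Let $G$ be a (possibly infinite) cyclic graph with $\mathrm{wf}(G)=\frac pq$, where $p,q$ are relatively prime integers. If $v\in V$ is periodic, then its orbit has length $q$ and winding number $\gamma_q(v)=p$.
   Context: $S^1=\mathbb{R}/\mathbb{Z}$; $\preceq$/$\prec$ clockwise order; $\vec d(p,q)\in[0,1)$ clockwise distance. A directed graph has no loops and no pair of opposite edges; $N^+[G,v]=\{v\}\cup\{w:v\to w\}$. A directed graph with vertex set $V\subseteq S^1$ is cyclic if whenever $v\to u$ is an edge, $v\to w$ and $w\to u$ are edges for all $w\in V$ with $v\prec w\prec u\prec v$. For $0\le k<n/2$, $C_n^k$ is the cyclic graph on $\{0,\dots,n-1\}$ with edges $i\to i+s\bmod n$, $1\le s\le k$; a cyclic homomorphism is a directed-graph homomorphism weakly preserving cyclic order and non-constant when the domain has a directed cycle. For finite cyclic $G$, $\mathrm{wf}(G)=\sup\{k/n:\exists$ cyclic homomorphism $C_n^k\to G\}$; in general $\mathrm{wf}(G)=\sup\{\mathrm{wf}(G[W]):W\subseteq V$ finite$\}$. For $m\ge1$, $\gamma_m(v_0)=\sup\{\sum_{i=0}^{m-1}\vec d(v_i,v_{i+1}): v_{i+1}\in N^+[G,v_i]\}$. A vertex $v$ is periodic if there is $i\ge1$ such that $\gamma_i(v)$ is an integer and the supremum defining $\gamma_i(v)$ is achieved; the length of its orbit is the least such $i$, and its winding number is $\gamma_\ell(v)$ for that least $\ell$. *)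

From Stdlib Require Import Reals Lra Lia ZArith Arith List.
Open Scope R_scope.

(* Points of S^1 = R/Z are represented by reals; vertex sets are required to lie in [0,1). *)

Definition cd (p q : R) : R := frac_part (q - p).

(* weak cyclic order  a ⪯ b ⪯ c ⪯ a : going clockwise from a one meets b, then c
   (equalities allowed).  Equivalently d(a,b)+d(b,c)+d(c,a) <= 1. *)
Definition wcyc (a b c : R) : Prop := cd a b + cd b c + cd c a <= 1.

Definition directed_graph (V : R -> Prop) (E : R -> R -> Prop) : Prop :=
  (forall x, V x -> 0 <= x < 1) /\
  (forall v u, E v u -> V v /\ V u) /\
  (forall v, ~ E v v) /\
  (forall v u, E v u -> ~ E u v).

Definition cyclic_graph (V : R -> Prop) (E : R -> R -> Prop) : Prop :=
  forall v u, E v u -> forall w, V w -> 0 < cd v w < cd v u -> E v w /\ E w u.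

(* f : C_n^k -> G[W] is a cyclic homomorphism, W finite given by a list. *)
Definition cyclic_hom (E : R -> R -> Prop) (W : list R) (n k : nat) (f : nat -> R) : Prop :=
  (forall i, (i < n)%nat -> In (f i) W) /\
  (forall i s, (i < n)%nat -> (1 <= s <= k)%nat -> E (f i) (f ((i + s) mod n)%nat)) /\
  (forall i j l, (i < n)%nat -> (j < n)%nat -> (l < n)%nat ->
      wcyc (INR i / INR n) (INR j / INR n) (INR l / INR n) ->
      wcyc (f i) (f j) (f l)) /\
  ((1 <= k)%nat -> exists i j, (i < n)%nat /\ (j < n)%nat /\ f i <> f j).

Definition wf_set (E : R -> R -> Prop) (W : list R) (x : R) : Prop :=
  exists n k f, (1 <= n)%nat /\ (2 * k < n)%nat /\ cyclic_hom E W n k f /\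
    x = INR k / INR n.

Definition wf_is (V : R -> Prop) (E : R -> R -> Prop) (r : R) : Prop :=
  is_lub (fun x => exists W : list R, (forall y, In y W -> V y) /\
                     is_lub (wf_set E W) x) r.

Definition walk (E : R -> R -> Prop) (v : R) (m : nat) (w : nat -> R) : Prop :=
  w O = v /\ forall i, (i < m)%nat -> w (S i) = w i \/ E (w i) (w (S i)).

Fixpoint walk_len (w : nat -> R) (m : nat) : R :=
  match m with
  | O => 0
  | S m' => walk_len w m' + cd (w m') (w m)
  end.

(* the set whose supremum is gamma_m(v) *)
Definition gamma_set (E : R -> R -> Prop) (v : R) (m : nat) (x : R) : Prop :=
  exists w, walk E v m w /\ x = walk_len w m.

Definition periodic_at (E : R -> R -> Prop) (v : R) (i : nat) : Prop :=
  (1 <= i)%nat /\ exists g, is_lub (gamma_set E v i) g /\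
                   (exists z : Z, g = IZR z) /\ gamma_set E v i g.

Definition periodic (E : R -> R -> Prop) (v : R) : Prop := exists i, periodic_at E v i.

Definition orbit_length (E : R -> R -> Prop) (v : R) (l : nat) : Prop :=
  periodic_at E v l /\ forall i, periodic_at E v i -> (l <= i)%nat.

From Stdlib Require Import Reals ZArith List.
From Stdlib Require Import Lra Lia.
From Stdlib Require Import ClassicalEpsilon Classical.
Open Scope R_scope.

(* Write [z = gamma_l(v)] for the winding of the orbit of [v] of length [l].

   [wf(G) <= z/l]: the cyclic property lets a walk that starts (in the lift to R) behind another
   one keep up with it; hence every walk is dominated by one starting at [v], and walks from [v]
   gain at most [z] per [l] steps.  A cyclic homomorphism [C_n^k -> G] gives a walk gaining at
   least [k] per [n] steps, so [k/n <= z/l].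

   [wf(G) >= z/l]: from [v], repeatedly move to the farthest out-neighbour among the points of an
   optimal orbit walk.  This greedy walk is again optimal, so it returns to [v] after [l] steps
   with winding [z]; its [l] points are distinct by minimality of [l]; and the greedy choice makes
   its lift order-preserving, so it is the orbit of the rotation by [z/l].  Listing its points in
   cyclic order yields a cyclic homomorphism [C_l^z -> G] and shows [gcd(z, l) = 1].  Since [p/q]
   and [z/l] are both reduced, [q = l] and [p = z]. *)

(** * Lifts of points of the circle *)

Definition is_lift (x X : R) : Prop := exists j : Z, X = x + IZR j.

Lemma IZR_abs_lt1_eq0 (j : Z) : -1 < IZR j < 1 -> j = 0%Z.
Proof.
  intros [H1 H2]. apply lt_IZR in H2. apply (lt_IZR (-1)) in H1. lia.
Qed.

Lemma frac_part_plus_IZR (r : R) (j : Z) : 0 <= r < 1 -> frac_part (r + IZR j) = r.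
Proof.
  intros Hr. unfold frac_part, Int_part.
  assert (Hup : (j + 1)%Z = up (r + IZR j)).
  { apply tech_up; rewrite plus_IZR; simpl; lra. }
  rewrite <- Hup, minus_IZR, plus_IZR. simpl. lra.
Qed.

Lemma cd_bounds (x y : R) : 0 <= cd x y < 1.
Proof. unfold cd. destruct (base_fp (y - x)). lra. Qed.

Lemma is_lift_refl (x : R) : is_lift x x.
Proof. exists 0%Z. simpl. lra. Qed.

Lemma is_lift_plus_IZR (x X : R) (j : Z) : is_lift x X -> is_lift x (X + IZR j).
Proof. intros [i ->]. exists (i + j)%Z. rewrite plus_IZR. lra. Qed.

Lemma is_lift_plus_cd (x y X : R) : is_lift x X -> is_lift y (X + cd x y).
Proof.
  intros [i ->]. exists (i - Int_part (y - x))%Z.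
  unfold cd, frac_part. rewrite minus_IZR. lra.
Qed.

Lemma is_lift_diff (x X Y : R) : is_lift x X -> is_lift x Y -> exists j, Y = X + IZR j.
Proof. intros [i ->] [j ->]. exists (j - i)%Z. rewrite minus_IZR. lra. Qed.

Lemma cd_of_lifts (x y X Y : R) :
  is_lift x X -> is_lift y Y -> 0 <= Y - X < 1 -> cd x y = Y - X.
Proof.
  intros [i ->] [j ->] H. unfold cd.
  replace (y - x) with ((y + IZR j - (x + IZR i)) + IZR (i - j)) by (rewrite minus_IZR; lra).
  now apply frac_part_plus_IZR.
Qed.

Lemma is_lift_inj (x y X : R) :
  0 <= x < 1 -> 0 <= y < 1 -> is_lift x X -> is_lift y X -> x = y.
Proof.
  intros Hx Hy [i Hi] [j Hj].
  assert (Hij : (i - j = 0)%Z) by (apply IZR_abs_lt1_eq0; rewrite minus_IZR; lra).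
  replace i with j in Hi by lia. lra.
Qed.

Lemma is_lift_neq (x y X Y : R) : is_lift x X -> is_lift y Y -> X < Y < X + 1 -> x <> y.
Proof.
  intros LX LY HXY ->. destruct (is_lift_diff y X Y LX LY) as [j Hj].
  assert (H0 : (0 < j)%Z) by (apply lt_IZR; lra).
  assert (H1 : (j < 1)%Z) by (apply lt_IZR; lra).
  lia.
Qed.

Lemma cd_xx (x : R) : cd x x = 0.
Proof. rewrite (cd_of_lifts x x x x); try apply is_lift_refl; lra. Qed.

Lemma cd_eq0 (x y : R) : 0 <= x < 1 -> 0 <= y < 1 -> cd x y = 0 -> x = y.
Proof.
  intros Hx Hy H. apply (is_lift_inj x y x Hx Hy (is_lift_refl x)).
  rewrite <- (Rplus_0_r x), <- H. apply is_lift_plus_cd, is_lift_refl.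
Qed.

Lemma cd_gt0 (x y : R) : 0 <= x < 1 -> 0 <= y < 1 -> x <> y -> 0 < cd x y.
Proof.
  intros Hx Hy Hxy. destruct (cd_bounds x y) as [[H|H] _]; auto.
  exfalso. apply Hxy, cd_eq0; auto.
Qed.

Lemma cd_add_sym (x y : R) : 0 <= x < 1 -> 0 <= y < 1 -> x <> y -> cd x y + cd y x = 1.
Proof.
  intros Hx Hy Hxy.
  assert (H1 := cd_gt0 x y Hx Hy Hxy). destruct (cd_bounds x y). destruct (cd_bounds y x).
  assert (Hround : is_lift x (x + cd x y + cd y x)).
  { apply is_lift_plus_cd, is_lift_plus_cd, is_lift_refl. }
  destruct (is_lift_diff x x _ (is_lift_refl x) Hround) as [j Hj].
  assert (Hj1 : (j - 1 = 0)%Z) by (apply IZR_abs_lt1_eq0; rewrite minus_IZR; simpl; lra).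
  replace j with 1%Z in Hj by lia. simpl in Hj. lra.
Qed.

Lemma cd_in_window (x y X Y c : R) : is_lift x X -> is_lift y Y ->
  c <= X < c + 1 -> c <= Y < c + 1 -> cd x y = Y - X + (if Rlt_dec Y X then 1 else 0).
Proof.
  intros LX LY HX HY. destruct (Rlt_dec Y X).
  - rewrite (cd_of_lifts x y X (Y + IZR 1)); [simpl; lra | | | simpl; lra]; auto.
    now apply is_lift_plus_IZR.
  - rewrite (cd_of_lifts x y X Y); auto; lra.
Qed.

(* For lifts in one unit window: [A], [B], [C] are in strictly anticlockwise order. *)
Definition cyc_desc (A B C : R) : Prop :=
  (B < A /\ C < B) \/ (C < B /\ A < C) \/ (A < C /\ B < A).

Lemma wcyc_in_window (a b c A B C c0 : R) : is_lift a A -> is_lift b B -> is_lift c C ->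
  c0 <= A < c0 + 1 -> c0 <= B < c0 + 1 -> c0 <= C < c0 + 1 ->
  wcyc a b c <-> ~ cyc_desc A B C.
Proof.
  intros LA LB LC HA HB HC. unfold wcyc, cyc_desc.
  rewrite (cd_in_window a b A B c0), (cd_in_window b c B C c0), (cd_in_window c a C A c0); auto.
  destruct (Rlt_dec B A); destruct (Rlt_dec C B); destruct (Rlt_dec A C);
    split; intros; try lra; try (intro; lra); exfalso; apply H; lra.
Qed.

Lemma int_in_unit_window (r : R) : exists j : Z, r <= IZR j < r + 1.
Proof.
  destruct (archimed r) as [H1 H2].
  destruct (Req_dec (IZR (up r) - r) 1) as [E1|E1].
  - exists (up r - 1)%Z. rewrite minus_IZR. simpl. lra.
  - exists (up r). lra.
Qed.

(** * Walks *)

Lemma walk_len_add (w : nat -> R) (m n : nat) :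
  walk_len w (m + n) = walk_len w m + walk_len (fun i => w (m + i)%nat) n.
Proof.
  induction n as [|n IH]; simpl.
  - rewrite Nat.add_0_r. lra.
  - rewrite Nat.add_succ_r. simpl. rewrite IH. lra.
Qed.

Lemma walk_len_ext (w w' : nat -> R) (m : nat) :
  (forall i, (i <= m)%nat -> w i = w' i) -> walk_len w m = walk_len w' m.
Proof.
  induction m as [|m IH]; intros H; simpl; auto.
  rewrite IH by (intros; apply H; lia). rewrite (H m), (H (S m)) by lia. reflexivity.
Qed.

Lemma walk_len_nondecr (w : nat -> R) (m n : nat) : (m <= n)%nat -> walk_len w m <= walk_len w n.
Proof.
  induction 1 as [|n _ IH]; simpl; [lra|]. destruct (cd_bounds (w n) (w (S n))). lra.
Qed.

Lemma walk_len_const (x : R) (m : nat) : walk_len (fun _ => x) m = 0.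
Proof. induction m as [|m IH]; simpl; [|rewrite IH, cd_xx]; lra. Qed.

Lemma is_lift_walk_len (w : nat -> R) (X : R) (t : nat) :
  is_lift (w 0%nat) X -> is_lift (w t) (X + walk_len w t).
Proof.
  intros H. induction t as [|t IH]; simpl.
  - now rewrite Rplus_0_r.
  - rewrite <- Rplus_assoc. now apply is_lift_plus_cd.
Qed.

Lemma walk_len_closed (w : nat -> R) (m : nat) :
  w m = w 0%nat -> exists j : Z, walk_len w m = IZR j.
Proof.
  intros Hm. assert (L := is_lift_walk_len w (w 0%nat) m (is_lift_refl _)).
  rewrite Hm in L. destruct (is_lift_diff _ _ _ (is_lift_refl _) L) as [j Hj].
  exists j. lra.
Qed.

Section Walks.
Variable E : R -> R -> Prop.

Lemma walk_const (x : R) (m : nat) : walk E x m (fun _ => x).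
Proof. split; auto. Qed.

Lemma walk_le (x : R) (m n : nat) (w : nat -> R) : (n <= m)%nat -> walk E x m w -> walk E x n w.
Proof. intros Hn [H0 H]. split; auto. intros i Hi. apply H. lia. Qed.

Lemma walk_shift (x : R) (m n : nat) (w : nat -> R) :
  walk E x (m + n) w -> walk E (w m) n (fun i => w (m + i)%nat).
Proof.
  intros [_ H]. split; [now rewrite Nat.add_0_r|].
  intros i Hi. rewrite Nat.add_succ_r. apply H. lia.
Qed.

Definition walk_cat (a : nat -> R) (m : nat) (b : nat -> R) : nat -> R :=
  fun i => if (i <=? m)%nat then a i else b (i - m)%nat.

Lemma walk_cat_walk (x : R) (m n : nat) (a b : nat -> R) :
  walk E x m a -> walk E (a m) n b -> walk E x (m + n) (walk_cat a m b).
Proof.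
  intros [Ha0 Ha] [Hb0 Hb]. split; [exact Ha0|].
  intros i Hi. unfold walk_cat.
  destruct (Nat.leb_spec (S i) m), (Nat.leb_spec i m); try lia.
  - apply Ha. lia.
  - replace i with m by lia. replace (S m - m)%nat with 1%nat by lia.
    rewrite <- Hb0. apply Hb. lia.
  - replace (S i - m)%nat with (S (i - m)) by lia. apply Hb. lia.
Qed.

Lemma walk_len_cat (m n : nat) (a b : nat -> R) : a m = b 0%nat ->
  walk_len (walk_cat a m b) (m + n) = walk_len a m + walk_len b n.
Proof.
  intros Hab. rewrite walk_len_add. f_equal; apply walk_len_ext; intros i Hi; unfold walk_cat.
  - destruct (Nat.leb_spec i m); [reflexivity | lia].
  - destruct (Nat.leb_spec (m + i) m).
    + replace i with 0%nat by lia. now rewrite Nat.add_0_r.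
    + f_equal. lia.
Qed.

Definition walk_snoc (a : nat -> R) (m : nat) (y : R) : nat -> R :=
  fun i => if (i <=? m)%nat then a i else y.

Lemma walk_snoc_walk (x y : R) (m : nat) (a : nat -> R) :
  walk E x m a -> (y = a m \/ E (a m) y) -> walk E x (S m) (walk_snoc a m y).
Proof.
  intros [Ha0 Ha] Hy. split; [exact Ha0|].
  intros i Hi. unfold walk_snoc.
  destruct (Nat.leb_spec (S i) m), (Nat.leb_spec i m); try lia.
  - apply Ha. lia.
  - replace i with m by lia. destruct Hy; auto.
Qed.

Lemma walk_len_snoc (y : R) (m : nat) (a : nat -> R) :
  walk_len (walk_snoc a m y) (S m) = walk_len a m + cd (a m) y.
Proof.
  simpl. unfold walk_snoc at 2 3. rewrite Nat.leb_refl.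
  destruct (Nat.leb_spec (S m) m); [lia|].
  f_equal. apply walk_len_ext. intros i Hi. unfold walk_snoc.
  destruct (Nat.leb_spec i m); [reflexivity | lia].
Qed.

End Walks.

Lemma Rdiv_le_cross (a b c d : R) : 0 < b -> 0 < d -> a * d <= c * b -> a / b <= c / d.
Proof.
  intros Hb Hd H. apply (Rmult_le_reg_r (b * d)); [nra|].
  replace (a / b * (b * d)) with (a * d) by (field; lra).
  replace (c / d * (b * d)) with (c * b) by (field; lra). lra.
Qed.

Lemma INR_div_lt_iff (x y n : nat) : (0 < n)%nat -> INR x / INR n < INR y / INR n <-> (x < y)%nat.
Proof.
  intros Hn. assert (Hn' : 0 < / INR n) by (apply Rinv_0_lt_compat, lt_0_INR; lia).
  split; intros H.
  - apply INR_lt, (Rmult_lt_reg_r (/ INR n)); auto.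
  - apply Rmult_lt_compat_r, lt_INR; auto.
Qed.

Lemma INR_div_bounds (x n : nat) : (x < n)%nat -> 0 <= INR x / INR n < 1.
Proof.
  intros H. assert (0 < INR n) by (apply lt_0_INR; lia).
  assert (INR x < INR n) by (apply lt_INR; auto). assert (0 <= INR x) by apply pos_INR.
  split.
  - apply Rmult_le_pos; [lra | left; apply Rinv_0_lt_compat; lra].
  - apply (Rmult_lt_reg_r (INR n)); [lra|]. unfold Rdiv. rewrite Rmult_assoc, Rinv_l; lra.
Qed.

Lemma wcyc_mod_index (n i p q : nat) : (i < n)%nat -> (p <= q)%nat -> (q < n)%nat ->
  wcyc (INR i / INR n) (INR ((i + p) mod n) / INR n) (INR ((i + q) mod n) / INR n).
Proof.
  intros Hi Hpq Hq.
  assert (Hp' : ((i + p) mod n < n)%nat) by (apply Nat.mod_upper_bound; lia).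
  assert (Hq' : ((i + q) mod n < n)%nat) by (apply Nat.mod_upper_bound; lia).
  rewrite (wcyc_in_window _ _ _ (INR i / INR n) (INR ((i + p) mod n) / INR n)
             (INR ((i + q) mod n) / INR n) 0);
    try apply is_lift_refl; try (rewrite Rplus_0_l; now apply INR_div_bounds).
  unfold cyc_desc. rewrite !INR_div_lt_iff by lia.
  assert (Hwrap : forall x, (n <= x < 2 * n)%nat -> (x mod n = x - n)%nat).
  { intros x Hx. symmetry. apply Nat.mod_unique with 1%nat; lia. }
  destruct (Nat.lt_ge_cases (i + p) n), (Nat.lt_ge_cases (i + q) n).
  - rewrite !Nat.mod_small by lia. lia.
  - rewrite (Nat.mod_small (i + p)%nat), (Hwrap (i + q)%nat) by lia. lia.
  - lia.
  - rewrite !Hwrap by lia. lia.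
Qed.

(** * Orbits of an order-preserving circle map *)

Section RotationOrder.
Variables (U : nat -> R) (l : nat) (z : Z).
Hypothesis l_pos : (1 <= l)%nat.
Hypothesis U_add_period : forall t, U (t + l)%nat = U t + IZR z.
Hypothesis U_succ_lt : forall s t j, U s + IZR j < U t -> U (S s) + IZR j < U (S t).
Hypothesis U_succ_eq : forall s t j, U s + IZR j = U t -> U (S s) + IZR j = U (S t).

Lemma U_add_periods (c t : nat) : U (t + c * l)%nat = U t + INR c * IZR z.
Proof.
  induction c as [|c IH]; [rewrite Nat.add_0_r; simpl; lra|].
  replace (t + S c * l)%nat with (t + c * l + l)%nat by lia.
  rewrite U_add_period, IH, S_INR. lra.
Qed.

(* Iterating [l] times, the displacement [j + s z] accumulates to [l (j + s z)], while the
   index gap [t + s l - s] accounts for as many periods [z]. *)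
Lemma rotation_rel (rel : R -> R -> Prop) :
  (forall x y c, rel x y -> rel (x + c) (y + c)) ->
  (forall x y w, rel x y -> rel y w -> rel x w) ->
  (forall s t j, rel (U s + IZR j) (U t) -> rel (U (S s) + IZR j) (U (S t))) ->
  forall s t j, rel (U s + IZR j) (U t) ->
  rel (IZR (Z.of_nat l * (j + Z.of_nat s * z))) (IZR (Z.of_nat (t + s * l - s) * z)).
Proof.
  intros Hshift Htrans Hsucc s t j Hst.
  set (d := (t + s * l - s)%nat). set (c := (j + Z.of_nat s * z)%Z).
  assert (Hiter : forall r s t j, rel (U s + IZR j) (U t) ->
                    rel (U (s + r)%nat + IZR j) (U (t + r)%nat)).
  { induction r as [|r IH]; intros s' t' j' H; rewrite ?Nat.add_0_r, ?Nat.add_succ_r; auto. }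
  assert (Hd : rel (U s + IZR c) (U (s + d)%nat)).
  { replace (s + d)%nat with (t + s * l)%nat by (unfold d; nia).
    rewrite U_add_periods. unfold c. rewrite plus_IZR, mult_IZR, <- INR_IZR_INZ.
    replace (U s + (IZR j + INR s * IZR z)) with (U s + IZR j + INR s * IZR z) by ring.
    now apply Hshift. }
  assert (Hi : forall i, (1 <= i)%nat ->
             rel (U s + IZR (Z.of_nat i * c)) (U (s + i * d)%nat)).
  { induction i as [|i IH]; intros Hi; [lia|].
    destruct (Nat.eq_dec i 0) as [->|Hi0].
    { replace (Z.of_nat 1 * c)%Z with c by lia. now rewrite Nat.mul_1_l. }
    apply (Htrans _ (U (s + d)%nat + IZR (Z.of_nat i * c))).
    - replace (Z.of_nat (S i) * c)%Z with (c + Z.of_nat i * c)%Z by lia.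
      rewrite plus_IZR, <- Rplus_assoc. now apply Hshift.
    - replace (s + S i * d)%nat with (s + i * d + d)%nat by lia.
      apply Hiter, IH. lia. }
  specialize (Hi l l_pos). rewrite Nat.mul_comm, U_add_periods, INR_IZR_INZ, <- mult_IZR in Hi.
  specialize (Hshift _ _ (- U s) Hi).
  replace (U s + IZR (Z.of_nat l * c) + - U s) with (IZR (Z.of_nat l * c)) in Hshift by ring.
  replace (U s + IZR (Z.of_nat d * z) + - U s) with (IZR (Z.of_nat d * z)) in Hshift by ring.
  exact Hshift.
Qed.

Definition rot_index (s : nat) (j : Z) : Z := (Z.of_nat s * z + j * Z.of_nat l)%Z.

Lemma rot_index_lt (s t : nat) (j j' : Z) :
  U s + IZR j < U t + IZR j' -> (rot_index s j < rot_index t j')%Z.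
Proof.
  intros H. assert (H' : U s + IZR (j - j') < U t) by (rewrite minus_IZR; lra).
  apply (rotation_rel Rlt) in H'; [|intros; lra | intros; lra | exact U_succ_lt].
  apply lt_IZR in H'. unfold rot_index.
  rewrite Nat2Z.inj_sub, Nat2Z.inj_add, Nat2Z.inj_mul in H' by nia. nia.
Qed.

Lemma rot_index_eq (s t : nat) (j j' : Z) :
  U s + IZR j = U t + IZR j' -> rot_index s j = rot_index t j'.
Proof.
  intros H. assert (H' : U s + IZR (j - j') = U t) by (rewrite minus_IZR; lra).
  apply (rotation_rel eq) in H'; [| intros; congruence | intros; congruence | exact U_succ_eq].
  apply eq_IZR in H'. unfold rot_index.
  rewrite Nat2Z.inj_sub, Nat2Z.inj_add, Nat2Z.inj_mul in H' by nia. nia.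
Qed.

Lemma rot_index_lt_iff (s t : nat) (j j' : Z) :
  U s + IZR j < U t + IZR j' <-> (rot_index s j < rot_index t j')%Z.
Proof.
  split; [apply rot_index_lt|]. intros H.
  destruct (Rtotal_order (U s + IZR j) (U t + IZR j')) as [|[Heq|Hgt]]; auto.
  - apply rot_index_eq in Heq. lia.
  - apply rot_index_lt in Hgt. lia.
Qed.

Lemma rot_index_eq_iff (s t : nat) (j j' : Z) :
  U s + IZR j = U t + IZR j' <-> rot_index s j = rot_index t j'.
Proof.
  split; [apply rot_index_eq|]. intros H.
  destruct (Rtotal_order (U s + IZR j) (U t + IZR j')) as [Hlt|[|Hgt]]; auto.
  - apply rot_index_lt in Hlt. lia.
  - apply rot_index_lt in Hgt. lia.
Qed.

End RotationOrder.

(** * Domination of walks in cyclic graphs *)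

Section CyclicGraph.
Variables (V : R -> Prop) (E : R -> R -> Prop).
Hypothesis HD : directed_graph V E.
Hypothesis HC : cyclic_graph V E.

Lemma V_bounds (x : R) : V x -> 0 <= x < 1.
Proof. destruct HD as [H _]. exact (H x). Qed.

Lemma edge_V (x y : R) : E x y -> V x /\ V y.
Proof. destruct HD as [_ [H _]]. exact (H x y). Qed.

Lemma walk_V (x : R) (m : nat) (w : nat -> R) : walk E x m w -> V x ->
  forall i, (i <= m)%nat -> V (w i).
Proof.
  intros [H0 H] Hx i. induction i as [|i IH]; intros Hi; [now rewrite H0|].
  destruct (H i) as [Hq|Hq]; [lia | rewrite Hq; apply IH; lia | exact (proj2 (edge_V _ _ Hq))].
Qed.

Lemma edge_neq (x y : R) : E x y -> x <> y.
Proof. intros Hxy ->. destruct HD as [_ [_ [H _]]]. exact (H y Hxy). Qed.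

Lemma edge_from_behind (x x' y X Y : R) : V y -> is_lift x X -> is_lift y Y ->
  E x x' -> X <= Y < X + cd x x' -> E y x'.
Proof.
  intros Vy LX LY Hxx' HXY. destruct (Req_dec X Y) as [<-|HXY'].
  - replace y with x; [exact Hxx'|].
    apply (is_lift_inj x y X); auto. apply V_bounds, (edge_V _ _ Hxx'). now apply V_bounds.
  - destruct (cd_bounds x x').
    apply (HC x x' Hxx' y Vy). rewrite (cd_of_lifts x y X Y); auto; split; lra.
Qed.

Lemma catch_up (x x' y X Y : R) : V y -> is_lift x X -> is_lift y Y -> X <= Y ->
  (x' = x \/ E x x') -> X + cd x x' <= Y \/ (E y x' /\ Y + cd y x' = X + cd x x').
Proof.
  intros Vy LX LY HXY Hx'. destruct (Rle_dec (X + cd x x') Y) as [|Hgt]; [now left|right].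
  assert (Hxx' : E x x') by (destruct Hx' as [->|]; [rewrite cd_xx in Hgt; lra | easy]).
  assert (Hy : E y x') by (apply (edge_from_behind x x' y X Y); auto; split; lra).
  split; [exact Hy|].
  rewrite (cd_of_lifts y x' Y (X + cd x x')); [lra | exact LY | now apply is_lift_plus_cd |].
  destruct (cd_bounds x x'). lra.
Qed.

Lemma walk_dominate (m : nat) (b : nat -> R) (B0 A0 a0 : R) :
  walk E (b 0%nat) m b -> V (b 0%nat) -> V a0 ->
  is_lift (b 0%nat) B0 -> is_lift a0 A0 -> B0 <= A0 ->
  exists a, walk E a0 m a /\ B0 + walk_len b m <= A0 + walk_len a m.
Proof.
  intros Hb Vb0 Va0 LB LA HBA. induction m as [|m IH].
  { exists (fun _ => a0). split; [apply walk_const | simpl; lra]. }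
  destruct IH as [a [Ha Hlen]]; [eapply walk_le; [|exact Hb]; lia|].
  assert (Vam : V (a m)) by (apply (walk_V a0 m a Ha Va0); lia).
  assert (Hbm : b (S m) = b m \/ E (b m) (b (S m))) by (apply (proj2 Hb); lia).
  destruct (catch_up (b m) (b (S m)) (a m) (B0 + walk_len b m) (A0 + walk_len a m)) as
      [Hahead | [Hedge Heq]]; auto.
  - now apply is_lift_walk_len.
  - apply is_lift_walk_len. now rewrite (proj1 Ha).
  - exists (walk_snoc a m (a m)). split.
    + apply walk_snoc_walk; auto.
    + rewrite walk_len_snoc, cd_xx. simpl. lra.
  - exists (walk_snoc a m (b (S m))). split.
    + apply walk_snoc_walk; auto.
    + rewrite walk_len_snoc. simpl. lra.
Qed.

(** * [wf(G) <= z/l] *)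

Section PeriodBound.
Variables (v : R) (l : nat) (z : Z).
Hypothesis Vv : V v.
Hypothesis walk_len_le_z : forall w, walk E v l w -> walk_len w l <= IZR z.

(* Each block of [l] steps is dominated by a walk from (a lift of) [v], which gains at most [z]. *)
Lemma walk_len_periods_le (N : nat) (b : nat -> R) (B0 : R) (M : Z) :
  walk E (b 0%nat) (N * l) b -> V (b 0%nat) -> is_lift (b 0%nat) B0 -> B0 <= v + IZR M ->
  B0 + walk_len b (N * l) <= v + IZR M + INR N * IZR z.
Proof.
  revert b B0 M. induction N as [|N IH]; intros b B0 M Hb Vb0 LB HB; [simpl; lra|].
  replace (S N * l)%nat with (l + N * l)%nat in * by (simpl; lia).
  destruct (int_in_unit_window (B0 - v)) as [M' HM'].
  assert (HM'M : IZR M' <= IZR M).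
  { apply IZR_le. assert (IZR M' < IZR (M + 1)) by (rewrite plus_IZR; simpl; lra).
    apply lt_IZR in H. lia. }
  destruct (walk_dominate l b B0 (v + IZR M') v) as [a [Ha Hlen]]; auto.
  { eapply walk_le; [|exact Hb]. lia. }
  { apply is_lift_plus_IZR, is_lift_refl. }
  { lra. }
  assert (Ha_le := walk_len_le_z a Ha).
  assert (Vbl : V (b l)) by (apply (walk_V (b 0%nat) (l + N * l) b Hb Vb0); lia).
  specialize (IH (fun i => b (l + i)%nat) (B0 + walk_len b l) (M + z)%Z).
  simpl in IH. rewrite Nat.add_0_r, plus_IZR in IH.
  rewrite walk_len_add, S_INR.
  assert (IH' := IH (walk_shift E (b 0%nat) l (N * l) b Hb) Vbl (is_lift_walk_len b B0 l LB)
                    ltac:(lra)).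
  lra.
Qed.

End PeriodBound.

Section HomWalk.
Variables (W : list R) (n k : nat) (f : nat -> R).
Hypothesis W_V : forall y, In y W -> V y.
Hypothesis f_hom : cyclic_hom E W n k f.
Hypothesis k_pos : (1 <= k)%nat.
Hypothesis k_small : (2 * k < n)%nat.

Definition hom_unit (j : nat) : R := f (j mod n).

Lemma hom_unit_V (j : nat) : V (hom_unit j).
Proof. apply W_V, (proj1 f_hom), Nat.mod_upper_bound. lia. Qed.

Lemma hom_unit_bounds (j : nat) : 0 <= hom_unit j < 1.
Proof. apply V_bounds, hom_unit_V. Qed.

Lemma hom_unit_edge (i s : nat) : (1 <= s <= k)%nat -> E (hom_unit i) (hom_unit (i + s)).
Proof.
  intros Hs. unfold hom_unit. rewrite <- Nat.Div0.add_mod_idemp_l.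
  apply (proj1 (proj2 f_hom)); [apply Nat.mod_upper_bound; lia | exact Hs].
Qed.

Lemma hom_unit_wcyc (i s : nat) : (s < k)%nat ->
  wcyc (hom_unit i) (hom_unit (i + 1)) (hom_unit (i + S s)).
Proof.
  intros Hs. unfold hom_unit.
  rewrite <- (Nat.Div0.add_mod_idemp_l i 1), <- (Nat.Div0.add_mod_idemp_l i (S s)).
  assert (Hi : (i mod n < n)%nat) by (apply Nat.mod_upper_bound; lia).
  apply (proj1 (proj2 (proj2 f_hom))); try (apply Nat.mod_upper_bound; lia).
  apply wcyc_mod_index; lia.
Qed.

Definition hom_arc (j : nat) : R := walk_len hom_unit j.

Lemma hom_arc_le_cd (s i : nat) : (s <= k)%nat ->
  hom_arc (i + s) - hom_arc i <= cd (hom_unit i) (hom_unit (i + s)).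
Proof.
  revert i. induction s as [|s IH]; intros i Hs.
  { rewrite Nat.add_0_r, cd_xx. lra. }
  assert (IH1 := IH (i + 1)%nat ltac:(lia)).
  replace (i + 1 + s)%nat with (i + S s)%nat in IH1 by lia.
  assert (Harc : hom_arc (i + 1) = hom_arc i + cd (hom_unit i) (hom_unit (i + 1))).
  { rewrite Nat.add_1_r. reflexivity. }
  assert (Hw := hom_unit_wcyc i s ltac:(lia)). unfold wcyc in Hw.
  assert (Hne : hom_unit i <> hom_unit (i + S s)) by (apply edge_neq, hom_unit_edge; lia).
  assert (Hsym := cd_add_sym _ _ (hom_unit_bounds i) (hom_unit_bounds (i + S s)) Hne).
  lra.
Qed.

Lemma hom_arc_add_n (j : nat) : hom_arc j + 1 <= hom_arc (j + n).
Proof.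
  unfold hom_arc. rewrite walk_len_add.
  set (u := fun t => hom_unit (j + t)).
  assert (Hclosed : u n = u 0%nat).
  { unfold u, hom_unit. rewrite Nat.add_0_r, <- Nat.Div0.add_mod_idemp_r, Nat.Div0.mod_same.
    now rewrite Nat.add_0_r. }
  destruct (walk_len_closed u n Hclosed) as [c Hc].
  assert (Hstep : 0 < walk_len u 1).
  { simpl. rewrite Rplus_0_l. apply cd_gt0; try apply hom_unit_bounds.
    apply edge_neq. unfold u. rewrite Nat.add_0_r. apply hom_unit_edge. lia. }
  assert (Hmono := walk_len_nondecr u 1 n ltac:(lia)).
  assert (Hc0 : (0 < c)%Z) by (apply lt_IZR; lra).
  assert (Hc1 : IZR 1 <= IZR c) by (apply IZR_le; lia).
  simpl in Hc1. lra.
Qed.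

Lemma hom_arc_periods (c : nat) : INR c <= hom_arc (c * n).
Proof.
  induction c as [|c IH]; [simpl; unfold hom_arc; simpl; lra|].
  rewrite S_INR. replace (S c * n)%nat with (c * n + n)%nat by lia.
  assert (H := hom_arc_add_n (c * n)). lra.
Qed.

Definition hom_walk (t : nat) : R := hom_unit (t * k).

Lemma hom_walk_walk (m : nat) : walk E (f 0%nat) m hom_walk.
Proof.
  split.
  - unfold hom_walk, hom_unit. now rewrite Nat.Div0.mod_0_l.
  - intros i _. right. unfold hom_walk. replace (S i * k)%nat with (i * k + k)%nat by lia.
    apply hom_unit_edge. lia.
Qed.

Lemma hom_walk_len_ge (t : nat) : hom_arc (t * k) <= walk_len hom_walk t.
Proof.
  induction t as [|t IH]; [unfold hom_arc; simpl; lra|].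
  simpl walk_len. unfold hom_walk at 2 3. replace (S t * k)%nat with (t * k + k)%nat by lia.
  assert (H := hom_arc_le_cd k (t * k) (le_n k)). lra.
Qed.

Lemma hom_walk_len_periods (N : nat) : INR (N * k) <= walk_len hom_walk (N * n).
Proof.
  eapply Rle_trans; [|apply hom_walk_len_ge].
  replace (N * n * k)%nat with (N * k * n)%nat by lia. apply hom_arc_periods.
Qed.

End HomWalk.

Lemma hom_ratio_le (v : R) (l : nat) (z : Z) : V v ->
  (forall w, walk E v l w -> walk_len w l <= IZR z) ->
  forall W n k f, (forall y, In y W -> V y) -> cyclic_hom E W n k f ->
  (1 <= k)%nat -> (2 * k < n)%nat -> (Z.of_nat (l * k) <= Z.of_nat n * z)%Z.
Proof.
  intros Vv Hopt W n k f W_V f_hom Hk Hkn.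
  assert (Vf0 : V (f 0%nat)) by (apply W_V, (proj1 f_hom); lia).
  assert (Hh0 : hom_walk n k f 0%nat = f 0%nat).
  { unfold hom_walk, hom_unit. now rewrite Nat.Div0.mod_0_l. }
  assert (Hh := hom_walk_walk W n k f f_hom Hk Hkn (l * n)). rewrite <- Hh0 in Hh.
  destruct (int_in_unit_window (f 0%nat - v)) as [M HM].
  destruct (walk_dominate (l * n) (hom_walk n k f) (f 0%nat) (v + IZR M) v Hh) as [a [Ha Hdom]];
    rewrite ?Hh0; auto using is_lift_refl, is_lift_plus_IZR; [lra|].
  assert (Hbound : v + walk_len a (n * l) <= v + IZR 0 + INR n * IZR z).
  { assert (Ha' : walk E (a 0%nat) (n * l) a).
    { rewrite (proj1 Ha). replace (n * l)%nat with (l * n)%nat by lia. exact Ha. }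
    apply (walk_len_periods_le v l z Vv Hopt); [exact Ha' | | | simpl; lra];
      rewrite (proj1 Ha); auto using is_lift_refl. }
  assert (Hlen := hom_walk_len_periods W n k f W_V f_hom Hk Hkn l).
  replace (n * l)%nat with (l * n)%nat in Hbound by lia.
  assert (Hlt : IZR (Z.of_nat (l * k)) < IZR (Z.of_nat n * z + 1)).
  { rewrite plus_IZR, mult_IZR, <- !INR_IZR_INZ. simpl. lra. }
  apply lt_IZR in Hlt. lia.
Qed.

Lemma wf_le_ratio (v : R) (l : nat) (z : Z) (r : R) : V v -> (1 <= l)%nat -> (0 <= z)%Z ->
  (forall w, walk E v l w -> walk_len w l <= IZR z) ->
  wf_is V E r -> r <= IZR z / INR l.
Proof.
  intros Vv Hl Hz Hopt [_ Hleast]. apply Hleast.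
  intros x [W [W_V [_ Hx]]]. apply Hx.
  intros y [n [k [f [Hn [Hkn [f_hom ->]]]]]].
  assert (Hn0 : 0 < INR n) by (apply lt_0_INR; lia).
  assert (Hl0 : 0 < INR l) by (apply lt_0_INR; lia).
  assert (Hz0 : 0 <= IZR z) by (apply IZR_le; lia).
  destruct k as [|k].
  - simpl. unfold Rdiv. rewrite Rmult_0_l.
    apply Rmult_le_pos; [lra | left; apply Rinv_0_lt_compat; lra].
  - assert (Hb := hom_ratio_le v l z Vv Hopt W n (S k) f W_V f_hom ltac:(lia) Hkn).
    apply IZR_le in Hb. rewrite mult_IZR, <- !INR_IZR_INZ, mult_INR in Hb.
    apply Rdiv_le_cross; lra.
Qed.

(** * The greedy orbit *)

Lemma farthest_succ_ex (L : list R) (x : R) : exists y,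
  (y = x \/ (E x y /\ In y L)) /\ (forall y', In y' L -> E x y' -> cd x y' <= cd x y).
Proof.
  induction L as [|a L [y [Hy Hmax]]].
  { exists x. split; [now left | intros ? []]. }
  destruct (classic (E x a /\ cd x y < cd x a)) as [[Ha Hlt]|Hn].
  - exists a. split; [right; split; simpl; auto|].
    intros y' [<-|Hin] Hy'; [lra|]. specialize (Hmax y' Hin Hy'). lra.
  - exists y. split; [destruct Hy as [|[]]; [left | right]; simpl; auto|].
    intros y' [->|Hin] Hy'; auto.
    destruct (Rle_dec (cd x y') (cd x y)); auto. exfalso. apply Hn. split; auto. lra.
Qed.

Section GreedyOrbit.
Variables (v : R) (l : nat) (z : Z) (w0 : nat -> R).
Hypothesis Vv : V v.
Hypothesis l_pos : (1 <= l)%nat.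
Hypothesis z_pos : (1 <= z)%Z.
Hypothesis w0_walk : walk E v l w0.
Hypothesis w0_len : walk_len w0 l = IZR z.
Hypothesis walk_len_le_z : forall w, walk E v l w -> walk_len w l <= IZR z.
Hypothesis l_min : forall i, periodic_at E v i -> (l <= i)%nat.

Definition orbit_pts : list R := map w0 (seq 0 (S l)).

Definition greedy_next (x : R) : R :=
  proj1_sig (constructive_indefinite_description _ (farthest_succ_ex orbit_pts x)).

Lemma greedy_next_spec (x : R) :
  (greedy_next x = x \/ (E x (greedy_next x) /\ In (greedy_next x) orbit_pts)) /\
  (forall y, In y orbit_pts -> E x y -> cd x y <= cd x (greedy_next x)).
Proof. unfold greedy_next. now destruct constructive_indefinite_description. Qed.

Lemma w0_in_orbit_pts (t : nat) : (t <= l)%nat -> In (w0 t) orbit_pts.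
Proof. intros Ht. apply in_map, in_seq. lia. Qed.

Lemma orbit_pts_V (y : R) : In y orbit_pts -> V y.
Proof.
  intros Hy. apply in_map_iff in Hy as [t [<- Ht]]. apply in_seq in Ht.
  apply (walk_V v l w0 w0_walk Vv). lia.
Qed.

Fixpoint greedy_walk (t : nat) : R :=
  match t with O => v | S t => greedy_next (greedy_walk t) end.

Lemma greedy_walk_in (t : nat) : In (greedy_walk t) orbit_pts.
Proof.
  induction t as [|t IH]; simpl.
  - rewrite <- (proj1 w0_walk). apply w0_in_orbit_pts. lia.
  - destruct (proj1 (greedy_next_spec (greedy_walk t))) as [->|[_ H]]; auto.
Qed.

Lemma greedy_walk_V (t : nat) : V (greedy_walk t).
Proof. apply orbit_pts_V, greedy_walk_in. Qed.

Lemma greedy_walk_bounds (t : nat) : 0 <= greedy_walk t < 1.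
Proof. apply V_bounds, greedy_walk_V. Qed.

Lemma greedy_walk_walk (m : nat) : walk E v m greedy_walk.
Proof.
  split; [reflexivity|]. intros i _. simpl.
  destruct (proj1 (greedy_next_spec (greedy_walk i))) as [|[]]; auto.
Qed.

Definition greedy_lift (t : nat) : R := v + walk_len greedy_walk t.

Lemma is_lift_greedy_lift (t : nat) : is_lift (greedy_walk t) (greedy_lift t).
Proof. apply is_lift_walk_len, is_lift_refl. Qed.

Lemma greedy_lift_succ (t : nat) :
  greedy_lift (S t) = greedy_lift t + cd (greedy_walk t) (greedy_walk (S t)).
Proof. unfold greedy_lift. simpl. ring. Qed.

Lemma greedy_lift_ge_w0 (t : nat) : (t <= l)%nat -> v + walk_len w0 t <= greedy_lift t.
Proof.
  induction t as [|t IH]; intros Ht; [unfold greedy_lift; simpl; lra|].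
  rewrite greedy_lift_succ. simpl walk_len.
  assert (Hw0 : w0 (S t) = w0 t \/ E (w0 t) (w0 (S t))) by (apply (proj2 w0_walk); lia).
  assert (Lw0 : is_lift (w0 t) (v + walk_len w0 t)).
  { apply is_lift_walk_len. rewrite (proj1 w0_walk). apply is_lift_refl. }
  destruct (cd_bounds (greedy_walk t) (greedy_walk (S t))).
  destruct (catch_up (w0 t) (w0 (S t)) (greedy_walk t) (v + walk_len w0 t) (greedy_lift t))
    as [Hahead | [Hedge Heq]]; auto using greedy_walk_V, is_lift_greedy_lift.
  - apply IH. lia.
  - lra.
  - assert (Hfar := proj2 (greedy_next_spec (greedy_walk t)) _ (w0_in_orbit_pts (S t) Ht) Hedge).
    simpl in Hfar |- *. lra.
Qed.

Lemma walk_len_greedy_walk_l : walk_len greedy_walk l = IZR z.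
Proof.
  assert (H1 := greedy_lift_ge_w0 l (le_n l)). unfold greedy_lift in H1.
  assert (H2 := walk_len_le_z greedy_walk (greedy_walk_walk l)). lra.
Qed.

Lemma greedy_walk_l : greedy_walk l = v.
Proof.
  apply (is_lift_inj _ _ (greedy_lift l)); auto using greedy_walk_bounds, V_bounds.
  - apply is_lift_greedy_lift.
  - unfold greedy_lift. rewrite walk_len_greedy_walk_l. apply is_lift_plus_IZR, is_lift_refl.
Qed.

Lemma greedy_walk_shift (a b i : nat) :
  greedy_walk a = greedy_walk b -> greedy_walk (a + i) = greedy_walk (b + i).
Proof.
  intros H. induction i as [|i IH]; [now rewrite !Nat.add_0_r|].
  rewrite !Nat.add_succ_r. simpl. now rewrite IH.
Qed.

Lemma greedy_walk_add_l (t : nat) : greedy_walk (t + l) = greedy_walk t.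
Proof.
  change (greedy_walk (t + l) = greedy_walk (0 + t)). rewrite Nat.add_comm.
  apply greedy_walk_shift. now rewrite greedy_walk_l.
Qed.

Lemma greedy_walk_mod (t : nat) : greedy_walk t = greedy_walk (t mod l).
Proof.
  rewrite (Nat.div_mod_eq t l) at 1. rewrite Nat.add_comm.
  generalize (t / l)%nat as c. induction c as [|c IH]; [now rewrite Nat.mul_0_r, Nat.add_0_r|].
  replace (t mod l + l * S c)%nat with (t mod l + l * c + l)%nat by lia.
  now rewrite greedy_walk_add_l.
Qed.

Lemma walk_len_greedy_walk_add (a i : nat) : greedy_walk a = v ->
  walk_len greedy_walk (a + i) = walk_len greedy_walk a + walk_len greedy_walk i.
Proof.
  intros Ha. rewrite walk_len_add. f_equal. apply walk_len_ext. intros j _.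
  rewrite <- (Nat.add_0_l j) at 2. apply greedy_walk_shift. now rewrite Ha.
Qed.

(* After returning to [v] the greedy walk starts over, so its first [d] steps are optimal. *)
Lemma greedy_return_periodic (d : nat) : (1 <= d <= l)%nat -> greedy_walk d = v ->
  periodic_at E v d.
Proof.
  intros Hd Hgd.
  assert (Hrest : greedy_walk (l - d) = v).
  { rewrite <- greedy_walk_l. replace l with (d + (l - d))%nat at 2 by lia.
    rewrite <- (Nat.add_0_l (l - d)) at 1. symmetry. apply greedy_walk_shift. now rewrite Hgd. }
  assert (Hsplit : IZR z = walk_len greedy_walk (l - d) + walk_len greedy_walk d).
  { rewrite <- walk_len_greedy_walk_l, <- walk_len_greedy_walk_add by exact Hrest.
    f_equal. lia. }
  destruct (walk_len_closed greedy_walk d Hgd) as [j Hj].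
  split; [lia|]. exists (walk_len greedy_walk d). split; [split|split].
  - intros x [a [Ha ->]].
    assert (Hcat := walk_cat_walk E v (l - d) d greedy_walk a (greedy_walk_walk (l - d))).
    rewrite Hrest in Hcat. specialize (Hcat Ha).
    replace (l - d + d)%nat with l in Hcat by lia.
    assert (Hle := walk_len_le_z _ Hcat).
    replace l with (l - d + d)%nat in Hle at 2 by lia.
    rewrite walk_len_cat in Hle by (now rewrite Hrest, (proj1 Ha)). lra.
  - intros b Hb. apply Hb. exists greedy_walk. split; [apply greedy_walk_walk | reflexivity].
  - exists j. exact Hj.
  - exists greedy_walk. split; [apply greedy_walk_walk | reflexivity].
Qed.

Lemma greedy_walk_inj (s t : nat) : (s < t < l)%nat -> greedy_walk s <> greedy_walk t.
Proof.
  intros Hst Heq.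
  assert (Hret : greedy_walk (l - (t - s)) = v).
  { rewrite <- greedy_walk_l. replace (l - (t - s))%nat with (s + (l - t))%nat by lia.
    replace l with (t + (l - t))%nat at 2 by lia. now apply greedy_walk_shift. }
  apply greedy_return_periodic, l_min in Hret; lia.
Qed.

Lemma greedy_walk_eq_mod (a b : nat) : greedy_walk a = greedy_walk b -> a mod l = b mod l.
Proof.
  rewrite (greedy_walk_mod a), (greedy_walk_mod b). intros H.
  assert (Ha : (a mod l < l)%nat) by (apply Nat.mod_upper_bound; lia).
  assert (Hb : (b mod l < l)%nat) by (apply Nat.mod_upper_bound; lia).
  destruct (Nat.lt_trichotomy (a mod l) (b mod l)) as [Hlt|[|Hgt]]; auto; exfalso.
  - exact (greedy_walk_inj _ _ (conj Hlt Hb) H).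
  - exact (greedy_walk_inj _ _ (conj Hgt Ha) (eq_sym H)).
Qed.

Lemma two_le_l : (2 <= l)%nat.
Proof.
  destruct (Nat.eq_dec l 1) as [Hl1|]; [exfalso|lia].
  assert (H := walk_len_greedy_walk_l). rewrite Hl1 in H. simpl in H.
  assert (Hz := IZR_le _ _ z_pos). destruct (cd_bounds v (greedy_next v)). lra.
Qed.

Lemma greedy_walk_succ_neq (s : nat) : greedy_walk (S s) <> greedy_walk s.
Proof.
  intros H. apply greedy_walk_eq_mod in H. assert (Hl2 := two_le_l).
  rewrite <- Nat.add_1_r, <- Nat.Div0.add_mod_idemp_l in H.
  assert (Hs : (s mod l < l)%nat) by (apply Nat.mod_upper_bound; lia).
  destruct (Nat.eq_dec (s mod l + 1) l) as [Hwrap|Hwrap].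
  - rewrite Hwrap, Nat.Div0.mod_same in H. lia.
  - rewrite Nat.mod_small in H; lia.
Qed.

Lemma greedy_walk_edge (s : nat) : E (greedy_walk s) (greedy_walk (S s)).
Proof.
  destruct (proj1 (greedy_next_spec (greedy_walk s))) as [H|[H _]]; [|exact H].
  exfalso. exact (greedy_walk_succ_neq s H).
Qed.

Lemma greedy_walk_pred (s t : nat) :
  greedy_walk (S s) = greedy_walk (S t) -> greedy_walk s = greedy_walk t.
Proof.
  intros H. rewrite <- (greedy_walk_add_l s), <- (greedy_walk_add_l t).
  replace (s + l)%nat with (S s + (l - 1))%nat by lia.
  replace (t + l)%nat with (S t + (l - 1))%nat by lia.
  now apply greedy_walk_shift.
Qed.

Lemma greedy_step_bounds (s : nat) : 0 < cd (greedy_walk s) (greedy_walk (S s)) < 1.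
Proof.
  split; [|apply cd_bounds].
  apply cd_gt0; auto using greedy_walk_bounds. intros H. exact (greedy_walk_succ_neq s (eq_sym H)).
Qed.

Lemma greedy_lift_add_l (t : nat) : greedy_lift (t + l) = greedy_lift t + IZR z.
Proof.
  unfold greedy_lift. rewrite Nat.add_comm, walk_len_greedy_walk_add by apply greedy_walk_l.
  rewrite walk_len_greedy_walk_l. ring.
Qed.

Lemma greedy_lift_succ_eq (s t : nat) (j : Z) :
  greedy_lift s + IZR j = greedy_lift t -> greedy_lift (S s) + IZR j = greedy_lift (S t).
Proof.
  intros H.
  assert (Hst : greedy_walk s = greedy_walk t).
  { apply (is_lift_inj _ _ (greedy_lift t)); auto using greedy_walk_bounds, is_lift_greedy_lift.
    rewrite <- H. apply is_lift_plus_IZR, is_lift_greedy_lift. }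
  rewrite !greedy_lift_succ. simpl. rewrite Hst. lra.
Qed.

(* The greedy choice makes the lifted walk order-preserving: if [t] lies strictly inside the arc
   of the step at [s], then [greedy_walk (S s)] is an out-neighbour of [greedy_walk t], so the
   greedy step from [t] reaches at least as far, and strictly farther since the orbit is simple. *)
Lemma greedy_lift_succ_lt (s t : nat) (j : Z) :
  greedy_lift s + IZR j < greedy_lift t -> greedy_lift (S s) + IZR j < greedy_lift (S t).
Proof.
  intros H. rewrite !greedy_lift_succ.
  set (X := greedy_lift s + IZR j). set (Y := greedy_lift t). fold X Y in H.
  assert (LX : is_lift (greedy_walk s) X) by apply is_lift_plus_IZR, is_lift_greedy_lift.
  assert (LY : is_lift (greedy_walk t) Y) by apply is_lift_greedy_lift.
  assert (Hs := greedy_step_bounds s). assert (Ht := greedy_step_bounds t).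
  replace (greedy_lift s + cd (greedy_walk s) (greedy_walk (S s)) + IZR j)
    with (X + cd (greedy_walk s) (greedy_walk (S s))) by (unfold X; ring).
  destruct (Rlt_dec Y (X + cd (greedy_walk s) (greedy_walk (S s)))) as [Hin|Hout]; [|lra].
  assert (Hedge : E (greedy_walk t) (greedy_walk (S s))).
  { apply (edge_from_behind (greedy_walk s) _ _ X Y); auto using greedy_walk_V, greedy_walk_edge.
    lra. }
  assert (Hfar := proj2 (greedy_next_spec (greedy_walk t)) _ (greedy_walk_in (S s)) Hedge).
  assert (LS : is_lift (greedy_walk (S s)) (X + cd (greedy_walk s) (greedy_walk (S s))))
    by now apply is_lift_plus_cd.
  rewrite (cd_of_lifts _ _ Y _ LY LS) in Hfar by lra.
  change (greedy_next (greedy_walk t)) with (greedy_walk (S t)) in Hfar.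
  destruct (Rle_lt_or_eq_dec _ _ Hfar) as [Hlt|Heq]; [lra|exfalso].
  assert (Hsucc : greedy_walk (S s) = greedy_walk (S t)).
  { apply (is_lift_inj _ _ (X + cd (greedy_walk s) (greedy_walk (S s))));
      auto using greedy_walk_bounds.
    replace (X + cd (greedy_walk s) (greedy_walk (S s)))
      with (Y + cd (greedy_walk t) (greedy_walk (S t))) by lra.
    now apply is_lift_plus_cd. }
  apply greedy_walk_pred in Hsucc.
  apply (is_lift_neq _ _ X Y LX LY); [lra | exact Hsucc].
Qed.

Lemma greedy_lift_lt_iff (s t : nat) (j j' : Z) :
  greedy_lift s + IZR j < greedy_lift t + IZR j' <-> (rot_index l z s j < rot_index l z t j')%Z.
Proof.
  apply rot_index_lt_iff; auto using greedy_lift_add_l, greedy_lift_succ_lt, greedy_lift_succ_eq.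
Qed.

Lemma greedy_lift_eq_iff (s t : nat) (j j' : Z) :
  greedy_lift s + IZR j = greedy_lift t + IZR j' <-> rot_index l z s j = rot_index l z t j'.
Proof.
  apply rot_index_eq_iff; auto using greedy_lift_add_l, greedy_lift_succ_lt, greedy_lift_succ_eq.
Qed.

Lemma gcd_z_l : Z.gcd z (Z.of_nat l) = 1%Z.
Proof.
  set (g := Z.gcd z (Z.of_nat l)).
  destruct (Z.gcd_divide_l z (Z.of_nat l)) as [z' Hz'].
  destruct (Z.gcd_divide_r z (Z.of_nat l)) as [l' Hl']. fold g in Hz', Hl'.
  assert (Hg0 : (0 <= g)%Z) by apply Z.gcd_nonneg.
  destruct (Z.eq_dec g 1) as [|Hg1]; [assumption | exfalso].
  assert (Hl'pos : (0 < l')%Z) by nia.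
  assert (Hl'lt : (l' < Z.of_nat l)%Z) by nia.
  assert (Hret : greedy_lift (Z.to_nat l') + IZR (- z') = greedy_lift 0 + IZR 0).
  { apply greedy_lift_eq_iff. unfold rot_index. rewrite Z2Nat.id by lia. nia. }
  apply (greedy_walk_inj 0 (Z.to_nat l')); [lia|].
  apply (is_lift_inj _ _ (greedy_lift 0)); auto using greedy_walk_bounds, is_lift_greedy_lift.
  rewrite <- (Rplus_0_r (greedy_lift 0)), <- Hret. apply is_lift_plus_IZR, is_lift_greedy_lift.
Qed.

Lemma rot_index_surj (i : Z) :
  exists tj : nat * Z, (fst tj < l)%nat /\ rot_index l z (fst tj) (snd tj) = i.
Proof.
  destruct (Z.gcd_bezout _ _ _ gcd_z_l) as [a [b Hab]].
  assert (Hl : (0 < Z.of_nat l)%Z) by lia.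
  assert (Hr := Z.mod_pos_bound (a * i) _ Hl).
  assert (Hq := Z.div_mod (a * i) (Z.of_nat l) ltac:(lia)).
  exists (Z.to_nat ((a * i) mod Z.of_nat l), ((a * i) / Z.of_nat l * z + i * b)%Z).
  simpl. split; [lia|]. unfold rot_index. rewrite Z2Nat.id by lia.
  replace ((a * i) mod Z.of_nat l)%Z with (a * i - Z.of_nat l * ((a * i) / Z.of_nat l))%Z by lia.
  transitivity (i * (a * z + b * Z.of_nat l))%Z; [ring | rewrite Hab; ring].
Qed.

(* [orbit_pos i] is the [i]-th point of the lifted orbit in increasing order. *)
Definition orbit_enum (i : Z) : nat * Z :=
  proj1_sig (constructive_indefinite_description _ (rot_index_surj i)).

Definition orbit_pos (i : Z) : R :=
  greedy_lift (fst (orbit_enum i)) + IZR (snd (orbit_enum i)).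

Definition orbit_vertex (i : nat) : R := greedy_walk (fst (orbit_enum (Z.of_nat i))).

Lemma orbit_enum_spec (i : Z) :
  (fst (orbit_enum i) < l)%nat /\ rot_index l z (fst (orbit_enum i)) (snd (orbit_enum i)) = i.
Proof. unfold orbit_enum. now destruct constructive_indefinite_description. Qed.

Lemma orbit_pos_rot_index (t : nat) (j : Z) :
  orbit_pos (rot_index l z t j) = greedy_lift t + IZR j.
Proof. apply greedy_lift_eq_iff. apply orbit_enum_spec. Qed.

Lemma orbit_pos_lt_iff (i i' : Z) : (i < i')%Z <-> orbit_pos i < orbit_pos i'.
Proof.
  unfold orbit_pos. rewrite greedy_lift_lt_iff, !(proj2 (orbit_enum_spec _)). reflexivity.
Qed.

Lemma orbit_pos_le (i i' : Z) : (i <= i')%Z -> orbit_pos i <= orbit_pos i'.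
Proof.
  intros H. destruct (Z.eq_dec i i') as [->|]; [lra|]. left. apply orbit_pos_lt_iff. lia.
Qed.

Lemma is_lift_orbit_pos (i : Z) :
  is_lift (greedy_walk (fst (orbit_enum i))) (orbit_pos i).
Proof. apply is_lift_plus_IZR, is_lift_greedy_lift. Qed.

Lemma orbit_pos_0 : orbit_pos 0 = v.
Proof.
  change 0%Z with (rot_index l z 0 0). rewrite orbit_pos_rot_index.
  unfold greedy_lift. simpl. ring.
Qed.

Lemma orbit_pos_add_l (i c : Z) : orbit_pos (i + c * Z.of_nat l) = orbit_pos i + IZR c.
Proof.
  destruct (orbit_enum_spec i) as [_ Hi].
  replace (i + c * Z.of_nat l)%Z
    with (rot_index l z (fst (orbit_enum i)) (snd (orbit_enum i) + c))
    by (unfold rot_index in *; lia).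
  rewrite orbit_pos_rot_index, plus_IZR. unfold orbit_pos. ring.
Qed.

Lemma orbit_pos_bounds (i : Z) : (0 <= i < Z.of_nat l)%Z -> v <= orbit_pos i < v + 1.
Proof.
  intros Hi. rewrite <- orbit_pos_0.
  replace (orbit_pos 0 + 1) with (orbit_pos (0 + 1 * Z.of_nat l))
    by (rewrite orbit_pos_add_l; auto).
  split; [apply orbit_pos_le | apply orbit_pos_lt_iff]; lia.
Qed.

Lemma is_lift_orbit_vertex (i : nat) : is_lift (orbit_vertex (i mod l)) (orbit_pos (Z.of_nat i)).
Proof.
  replace (Z.of_nat i) with (Z.of_nat (i mod l) + Z.of_nat (i / l) * Z.of_nat l)%Z
    by (rewrite (Nat.div_mod_eq i l) at 3; lia).
  rewrite orbit_pos_add_l. apply is_lift_plus_IZR, is_lift_orbit_pos.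
Qed.

Lemma z_lt_l : (z < Z.of_nat l)%Z.
Proof.
  apply orbit_pos_lt_iff.
  replace z with (rot_index l z 1 0) by (unfold rot_index; lia).
  replace (Z.of_nat l) with (0 + 1 * Z.of_nat l)%Z by lia.
  rewrite orbit_pos_rot_index, orbit_pos_add_l, orbit_pos_0, greedy_lift_succ.
  assert (H := greedy_step_bounds 0). unfold greedy_lift. simpl in H |- *. lra.
Qed.

Lemma orbit_vertex_V (i : nat) : V (orbit_vertex i).
Proof. apply greedy_walk_V. Qed.

Lemma orbit_vertex_edge (i s : nat) : (i < l)%nat -> (1 <= s <= Z.to_nat z)%nat ->
  E (orbit_vertex i) (orbit_vertex ((i + s) mod l)).
Proof.
  intros Hi Hs.
  set (t := fst (orbit_enum (Z.of_nat i))). set (j := snd (orbit_enum (Z.of_nat i))).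
  assert (Hidx : rot_index l z t j = Z.of_nat i) by apply orbit_enum_spec.
  assert (Hnext : orbit_pos (Z.of_nat i + z)
                  = orbit_pos (Z.of_nat i) + cd (greedy_walk t) (greedy_walk (S t))).
  { replace (Z.of_nat i + z)%Z with (rot_index l z (S t) j) by (unfold rot_index in *; lia).
    rewrite orbit_pos_rot_index, greedy_lift_succ. unfold orbit_pos. fold t j. ring. }
  assert (LX : is_lift (orbit_vertex i) (orbit_pos (Z.of_nat i))) by apply is_lift_orbit_pos.
  assert (LY := is_lift_orbit_vertex (i + s)). rewrite Nat2Z.inj_add in LY.
  assert (HXY : orbit_pos (Z.of_nat i) < orbit_pos (Z.of_nat i + Z.of_nat s))
    by (apply orbit_pos_lt_iff; lia).
  assert (HYZ : orbit_pos (Z.of_nat i + Z.of_nat s) <= orbit_pos (Z.of_nat i + z))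
    by (apply orbit_pos_le; lia).
  assert (Hedge : E (orbit_vertex i) (greedy_walk (S t))) by apply greedy_walk_edge.
  destruct (cd_bounds (greedy_walk t) (greedy_walk (S t))).
  destruct (Rle_lt_or_eq_dec _ _ HYZ) as [Hlt|Heq].
  - apply (HC _ _ Hedge _ (orbit_vertex_V _)).
    rewrite (cd_of_lifts _ _ _ _ LX LY) by lra. unfold orbit_vertex. fold t. lra.
  - replace (orbit_vertex ((i + s) mod l)) with (greedy_walk (S t)); [exact Hedge|].
    apply (is_lift_inj _ _ (orbit_pos (Z.of_nat i + Z.of_nat s)));
      auto using greedy_walk_bounds, V_bounds, orbit_vertex_V.
    rewrite Heq, Hnext. now apply is_lift_plus_cd.
Qed.

Lemma cyc_desc_compat (g h : nat -> R) (P : nat -> Prop) (i j m : nat) :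
  (forall x y, P x -> P y -> (g x < g y <-> h x < h y)) -> P i -> P j -> P m ->
  cyc_desc (g i) (g j) (g m) <-> cyc_desc (h i) (h j) (h m).
Proof.
  intros H Hi Hj Hm. unfold cyc_desc. rewrite !H by assumption. reflexivity.
Qed.

Lemma orbit_vertex_wcyc (i j m : nat) : (i < l)%nat -> (j < l)%nat -> (m < l)%nat ->
  wcyc (INR i / INR l) (INR j / INR l) (INR m / INR l) ->
  wcyc (orbit_vertex i) (orbit_vertex j) (orbit_vertex m).
Proof.
  intros Hi Hj Hm.
  assert (Hwin : forall x, (x < l)%nat -> 0 <= INR x / INR l < 0 + 1)
    by (intros; rewrite Rplus_0_l; now apply INR_div_bounds).
  assert (Hpos : forall x, (x < l)%nat -> v <= orbit_pos (Z.of_nat x) < v + 1)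
    by (intros; apply orbit_pos_bounds; lia).
  rewrite (wcyc_in_window _ _ _ (INR i / INR l) (INR j / INR l) (INR m / INR l) 0);
    auto using is_lift_refl.
  rewrite (wcyc_in_window _ _ _ (orbit_pos (Z.of_nat i)) (orbit_pos (Z.of_nat j))
             (orbit_pos (Z.of_nat m)) v); auto; try apply is_lift_orbit_pos.
  rewrite (cyc_desc_compat (fun x => INR x / INR l) (fun x => orbit_pos (Z.of_nat x))
             (fun x => x < l)%nat); auto.
  intros x y _ _. rewrite INR_div_lt_iff, <- orbit_pos_lt_iff by lia. lia.
Qed.

(* Otherwise the positions [0] and [l - z] would be joined by edges in both directions. *)
Lemma two_z_lt_l : (2 * Z.to_nat z < l)%nat.
Proof.
  assert (Hzl := z_lt_l).
  destruct (Nat.lt_ge_cases (2 * Z.to_nat z) l) as [|Hge]; [assumption | exfalso].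
  set (s := (l - Z.to_nat z)%nat).
  assert (E1 : E (orbit_vertex 0) (orbit_vertex s)).
  { assert (H := orbit_vertex_edge 0 s ltac:(lia) ltac:(unfold s; lia)).
    now rewrite Nat.add_0_l, Nat.mod_small in H by (unfold s; lia). }
  assert (E2 : E (orbit_vertex s) (orbit_vertex 0)).
  { assert (H := orbit_vertex_edge s (Z.to_nat z) ltac:(unfold s; lia) ltac:(lia)).
    now replace ((s + Z.to_nat z) mod l)%nat with 0%nat in H
      by (unfold s; replace (l - Z.to_nat z + Z.to_nat z)%nat with l by lia;
          symmetry; apply Nat.Div0.mod_same). }
  destruct HD as [_ [_ [_ Hasym]]]. exact (Hasym _ _ E1 E2).
Qed.

Lemma orbit_vertex_nonconst : orbit_vertex 0 <> orbit_vertex 1.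
Proof.
  assert (Hl2 := two_le_l).
  apply (is_lift_neq _ _ (orbit_pos 0) (orbit_pos 1)); try apply is_lift_orbit_pos.
  split; [apply orbit_pos_lt_iff; lia|].
  rewrite <- (Z.add_0_l 1) at 2. rewrite <- orbit_pos_add_l.
  apply orbit_pos_lt_iff. lia.
Qed.

Lemma greedy_orbit_wf_set :
  (forall y, In y (map greedy_walk (seq 0 l)) -> V y) /\
  wf_set E (map greedy_walk (seq 0 l)) (IZR z / INR l).
Proof.
  split.
  { intros y Hy. apply in_map_iff in Hy as [t [<- _]]. apply greedy_walk_V. }
  exists l, (Z.to_nat z), orbit_vertex.
  split; [lia|]. split; [exact two_z_lt_l|]. split.
  - split; [|split; [|split]].
    + intros i _. unfold orbit_vertex. apply in_map, in_seq.
      destruct (orbit_enum_spec (Z.of_nat i)). lia.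
    + intros i s Hi Hs. now apply orbit_vertex_edge.
    + intros i j m Hi Hj Hm. now apply orbit_vertex_wcyc.
    + intros _. exists 0%nat, 1%nat. assert (Hl2 := two_le_l).
      split; [lia | split; [lia | exact orbit_vertex_nonconst]].
  - rewrite !INR_IZR_INZ, Z2Nat.id by lia. reflexivity.
Qed.

End GreedyOrbit.

(** * [wf(G) >= z/l] *)

Lemma wf_set_le1 (W : list R) (x : R) : wf_set E W x -> x <= 1.
Proof.
  intros [n [k [f [Hn [Hk [_ ->]]]]]].
  destruct (INR_div_bounds k n); [lia | lra].
Qed.

Lemma wf_is_ge (W : list R) (x r : R) :
  wf_is V E r -> (forall y, In y W -> V y) -> wf_set E W x -> x <= r.
Proof.
  intros [Hub _] W_V Hx.
  destruct (completeness (wf_set E W)) as [s Hs].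
  - exists 1. intros y Hy. exact (wf_set_le1 W y Hy).
  - now exists x.
  - apply (Rle_trans _ s); [now apply Hs | apply Hub; now exists W].
Qed.

Lemma wf_is_nonneg (v r : R) : V v -> wf_is V E r -> 0 <= r.
Proof.
  intros Vv Hwf. apply (wf_is_ge (v :: nil)); auto.
  - intros y [<-|[]]. exact Vv.
  - exists 1%nat, 0%nat, (fun _ => v). split; [lia|]. split; [lia|]. split.
    + split; [|split; [|split]].
      * intros i _. now left.
      * intros i s _ Hs. lia.
      * intros i j m _ _ _ _. unfold wcyc. rewrite !cd_xx. lra.
      * intros H. lia.
    + simpl. unfold Rdiv. ring.
Qed.

Lemma periodic_at_1_of_walk_len_0 (v : R) (l : nat) : (1 <= l)%nat ->
  (forall w, walk E v l w -> walk_len w l <= 0) -> periodic_at E v 1.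
Proof.
  intros Hl Hopt. split; [lia|]. exists 0. split; [split|split].
  - intros x [w [Hw ->]].
    assert (Hcat := walk_cat_walk E v 1 (l - 1) w (fun _ => w 1%nat) Hw (walk_const E _ _)).
    replace (1 + (l - 1))%nat with l in Hcat by lia.
    assert (Hle := Hopt _ Hcat). replace l with (1 + (l - 1))%nat in Hle by lia.
    rewrite walk_len_cat, walk_len_const in Hle by reflexivity. lra.
  - intros b Hb. apply Hb. exists (fun _ => v).
    split; [apply walk_const | simpl; rewrite cd_xx; ring].
  - now exists 0%Z.
  - exists (fun _ => v). split; [apply walk_const | simpl; rewrite cd_xx; ring].
Qed.

Lemma wf_ge_ratio (v : R) (l : nat) (z : Z) (w0 : nat -> R) (r : R) :
  V v -> (1 <= l)%nat -> (0 <= z)%Z ->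
  walk E v l w0 -> walk_len w0 l = IZR z ->
  (forall w, walk E v l w -> walk_len w l <= IZR z) ->
  (forall i, periodic_at E v i -> (l <= i)%nat) ->
  wf_is V E r -> IZR z / INR l <= r /\ Z.gcd z (Z.of_nat l) = 1%Z.
Proof.
  intros Vv Hl Hz Hw0 Hlen Hopt Hmin Hwf. destruct (Z.eq_dec z 0) as [->|Hz0].
  - assert (Hl1 : l = 1%nat) by (apply (periodic_at_1_of_walk_len_0 v) in Hopt; auto;
                                  apply Hmin in Hopt; lia).
    subst l. split; [|reflexivity]. unfold Rdiv. rewrite Rmult_0_l. exact (wf_is_nonneg v r Vv Hwf).
  - destruct (greedy_orbit_wf_set v l z w0) as [W_V Hset]; auto; try lia.
    split; [exact (wf_is_ge _ _ _ Hwf W_V Hset)|]. apply (gcd_z_l v l z w0); auto; lia.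
Qed.

End CyclicGraph.

Lemma coprime_ratio_unique (p q z l : Z) : (0 < q)%Z -> (0 < l)%Z ->
  Z.gcd p q = 1%Z -> Z.gcd z l = 1%Z -> IZR p / IZR q = IZR z / IZR l -> q = l /\ p = z.
Proof.
  intros Hq Hl Hpq Hzl Heq.
  assert (Hq' : 0 < IZR q) by (apply IZR_lt; lia). assert (Hl' : 0 < IZR l) by (apply IZR_lt; lia).
  assert (Hcross : (p * l = z * q)%Z).
  { apply eq_IZR. rewrite !mult_IZR.
    replace (IZR p) with (IZR p / IZR q * IZR q) by (field; lra).
    replace (IZR z) with (IZR z / IZR l * IZR l) by (field; lra).
    rewrite Heq. ring. }
  assert (Hql : (q | l)%Z) by (apply (Z.gauss q p); [exists z; lia | now rewrite Z.gcd_comm]).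
  assert (Hlq : (l | q)%Z) by (apply (Z.gauss l z); [exists p; lia | now rewrite Z.gcd_comm]).
  assert (q = l) by (apply Z.divide_antisym_nonneg; auto; lia).
  subst l. split; [reflexivity | nia].
Qed.

Theorem mainTheorem9 (V : R -> Prop) (E : R -> R -> Prop) (p q : Z) :
  directed_graph V E -> cyclic_graph V E ->
  (0 < q)%Z -> Z.gcd p q = 1%Z ->
  wf_is V E (IZR p / IZR q) ->
  forall v, V v -> periodic E v ->
  forall l, orbit_length E v l ->
    Z.of_nat l = q /\ is_lub (gamma_set E v l) (IZR p).
Proof.
  intros HD HC Hq Hpq Hwf v Vv _ l [[Hl [g [Hlub [[z ->] [w0 [Hw0 Hlen]]]]]] Hmin].
  assert (Hopt : forall w, walk E v l w -> walk_len w l <= IZR z)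
    by (intros w Hw; apply Hlub; now exists w).
  assert (Hz : (0 <= z)%Z).
  { apply le_IZR. rewrite <- (walk_len_const v l). apply Hopt, walk_const. }
  assert (Hupper := wf_le_ratio V E HD HC v l z _ Vv Hl Hz Hopt Hwf).
  destruct (wf_ge_ratio V E HD HC v l z w0 _ Vv Hl Hz Hw0 (eq_sym Hlen) Hopt Hmin Hwf)
    as [Hlower Hzl].
  rewrite INR_IZR_INZ in Hupper, Hlower.
  destruct (coprime_ratio_unique p q z (Z.of_nat l)) as [-> ->]; auto; [lia | lra].
Qed.
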